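(* Let $G=(V,E)$ be a graph and $S\subseteq V$ with $|S|=k$ such that every connected component of $G-S$ is a clique or a tree; let $\mathcal{C}$ be the set of these components, and label the components as described in the context. Let $P$ be a cycle of $G$ with $P\cap S\neq\emptyset$, let $P_1,\dots,P_l$ be its fragments in the order they appear on $P$, and for each $i$ let $v_i\in S$ be such that $P_i$ is a $v_i$–$v_{i+1}$ path (indices modulo $l$). Then there is a cycle $P'$ of $G$ that decomposes into $l$ fragments $P'_1,\dots,P'_l$ such that each $P'_i$ is a $v_i$–$v_{i+1}$ path, the internal vertices of each $P'_i$ (if any) belong to a component labeled $(v_i,v_{i+1})$, and $|P|\le|P'|$.
   Context: $G$ is a simple undirected graph. A fragment of a cycle $P$ is a subpath of $P$ whose two endpoints lie in $S$ and which contains no other vertex of $S$. For (possibly equal) $u,v\in S$ and $C\in\mathcal{C}$ define $q(C,u,v)$: (i) if $N(u)\cap C=\emptyset$ or $N(v)\cap C=\emptyset$, $q(C,u,v)=-\infty$; (ii) if $C$ is a clique and $N(u)\cap C=N(v)\cap C=\{w\}$ for a single vertex $w$, $q(C,u,v)=2$; (iii) if $C$ is a clique and neither (i) nor (ii) holds, $q(C,u,v)=|C|+1$; (iv) if $C$ is a tree and (i) does not hold, $q(C,u,v)$ equals two plus the maximum, over $w_u\in N(u)\cap C$ and $w_v\in N(v)\cap C$, of the length of the $w_u$–$w_v$ path in $C$. Labeling: for each ordered pair (possibly equal) $u,v\in S$, among the components $C\in\mathcal{C}$ with $q(C,u,v)>0$, the $k$ with largest $q(C,u,v)$ (ties broken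 arbitrarily; all of them if fewer than $k$) receive the label $(u,v)$. A component may receive several labels. *)

From mathcomp Require Import all_boot.
Set Implicit Arguments. Unset Strict Implicit. Unset Printing Implicit Defensive.

Section Defs.
Variable T : finType.
Variable e : rel T.  (* simple undirected graph: symmetric, irreflexive *)

(* a cycle of G, given as the cyclic sequence of its distinct vertices;
   its length |P| is size P *)
Definition is_cycle (c : seq T) : bool := [&& 2 < size c, uniq c & cycle e c].

Definition outrel (S : {set T}) : rel T :=
  fun a b => [&& e a b, a \notin S & b \notin S].
Definition compOf (S : {set T}) (x : T) : {set T} :=
  [set y | connect (outrel S) x y].
Definition components (S : {set T}) : {set {set T}} :=
  [set compOf S x | x in ~: S].

Definition is_clique (C : {set T}) : bool :=
  [forall x in C, forall y in C, (x != y) ==> e x y].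

Definition inrel (C : {set T}) : rel T :=
  fun a b => [&& e a b, a \in C & b \in C].
Definition is_tree (C : {set T}) : Prop :=
  [/\ C != set0,
      (forall x y, x \in C -> y \in C -> connect (inrel C) x y) &
      ~ (exists c : seq T, is_cycle c /\ {subset c <= C})].

Definition cpath (C : {set T}) (a b : T) (s : seq T) : bool :=
  [&& head a s == a, last a s == b, path e a (behead s), uniq s,
      all (fun x => x \in C) s & s != [::]].

(* length (number of edges) of the a--b path in C (unique when G[C] is a tree) *)
Definition tpath_len (C : {set T}) (a b : T) : nat :=
  \max_(n < #|T|) (if [exists p : n.+1.-tuple T, cpath C a b p] then val n else 0).

Definition NC (C : {set T}) (u : T) : {set T} := [set y in C | e u y].

(* q(C,u,v); None encodes -infinity *)
Definition q (C : {set T}) (u v : T) : option nat :=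
  if (NC C u == set0) || (NC C v == set0) then None
  else if is_clique C then
    (if (NC C u == NC C v) && (#|NC C u| == 1) then Some 2 else Some (#|C|).+1)
  else Some (2 + \max_(a in NC C u) \max_(b in NC C v) tpath_len C a b).

Definition qpos (x : option nat) : bool := if x is Some n then 0 < n else false.
Definition qle (x y : option nat) : bool :=
  match x, y with
  | None, _ => true
  | Some _, None => false
  | Some m, Some n => m <= n
  end.

(* lab u v = the set of components receiving the label (u,v) *)
Definition valid_labeling (S : {set T}) (k : nat) (lab : T -> T -> {set {set T}})
  : Prop :=
  forall u v, u \in S -> v \in S ->
    let cand := [set C in components S | qpos (q C u v)] in
    [/\ lab u v \subset cand,
        #|lab u v| = minn k #|cand| &
        forall C C', C \in lab u v -> C' \in cand -> C' \notin lab u v ->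
          qle (q C' u v) (q C u v)].

(* fragment i runs from vs_i through the internal vertices ws_i to vs_(i+1 mod l) *)
Definition fragments_ok (S : {set T}) (lab : T -> T -> {set {set T}})
  (vs : seq T) (ws : seq (seq T)) : Prop :=
  forall u v w, ((u, v), w) \in zip (zip vs (rot 1 vs)) ws ->
    all (fun x => x \notin S) w /\
    (w != [::] -> exists2 C, C \in lab u v & {subset w <= C}).

End Defs.

From mathcomp Require Import all_boot.
Set Implicit Arguments. Unset Strict Implicit. Unset Printing Implicit Defensive.

(* Fix the fragments of P one at a time. A fragment from u to v whose internal
   vertices lie in a component C0 not labelled (u,v) shows that q(C0,u,v) is at
   least its number of edges. As C0 is a candidate left out of the labelling,
   the label (u,v) went to k components, each with q at least q(C0,u,v). The
   other fragments, fewer than k, meet fewer than k components, so some labelled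
   C is disjoint from the rest of the cycle; by the definition of q (a hamiltonian
   path of a clique, a longest path of a tree) C carries a u--v detour at least
   as long as the old fragment. Substituting it keeps a cycle, does not shorten
   it, and decreases the number of fragments violating the labelling. *)

Section SeqRot.
Variables A B : Type.

Lemma take_zip n (s : seq A) (t : seq B) : take n (zip s t) = zip (take n s) (take n t).
Proof. by elim: n s t => [|n IHn] [|x s] [|y t] //=; rewrite IHn. Qed.

Lemma drop_zip n (s : seq A) (t : seq B) : drop n (zip s t) = zip (drop n s) (drop n t).
Proof. by elim: n s t => [|n IHn] [|x s] [|y t] //=; case: (drop n _). Qed.

Lemma zip_rot n (s : seq A) (t : seq B) :
  size s = size t -> zip (rot n s) (rot n t) = rot n (zip s t).
Proof. by move=> eq_st; rewrite /rot zip_cat ?size_drop ?eq_st // drop_zip take_zip. Qed.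

Lemma flatten_rot n (ss : seq (seq A)) :
  flatten (rot n ss) = rot (size (flatten (take n ss))) (flatten ss).
Proof.
by rewrite [rot n ss]/rot -[flatten ss](congr1 _ (cat_take_drop n ss)) !flatten_cat
   rot_size_cat.
Qed.

Lemma filter_rot (a : pred A) n (s : seq A) :
  filter a (rot n s) = rot (count a (take n s)) (filter a s).
Proof.
by rewrite [rot n s]/rot -[filter a s](congr1 _ (cat_take_drop n s)) !filter_cat -size_filter
   rot_size_cat.
Qed.

End SeqRot.

Lemma mem_zipr (A B : eqType) (s : seq A) (t : seq B) x y : (x, y) \in zip s t -> y \in t.
Proof.
elim: s t => [|a s IHs] [|b t] //=; rewrite !inE.
by case/predU1P=> [[_ ->] | /IHs ->]; rewrite ?eqxx ?orbT.
Qed.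

Lemma exists_distinct_mem2 (T : finType) (A B : {set T}) :
  A != set0 -> B != set0 -> ~~ ((A == B) && (#|A| == 1)) ->
  exists a b, [/\ a \in A, b \in B & a != b].
Proof.
move=> /set0Pn [a0 Aa0] /set0Pn [b0 Bb0] notA1.
case: (pickP [pred ab : T * T | [&& ab.1 \in A, ab.2 \in B & ab.1 != ab.2]]).
  by case=> a b /and3P [Aa Bb ab]; exists a, b.
move=> none.
have eq_b0 a : a \in A -> a = b0.
  by move=> Aa; have := none (a, b0); rewrite /= Aa Bb0 /= => /negbFE/eqP.
have eq_a0 b : b \in B -> b = a0.
  by move=> Bb; have := none (a0, b); rewrite /= Aa0 Bb /= => /negbFE/eqP.
have b0a0 : b0 = a0 := eq_a0 b0 Bb0.
have A1 : A = [set b0].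
  by apply/setP => a; rewrite inE; apply/idP/eqP => [/eq_b0 //|->]; rewrite b0a0.
have B1 : B = [set b0].
  by apply/setP => b; rewrite inE b0a0; apply/idP/eqP => [/eq_a0 //|->]; rewrite -b0a0.
by move: notA1; rewrite A1 B1 eqxx cards1.
Qed.

Section Components.
Variables (T : finType) (e : rel T) (S : {set T}).
Hypothesis e_sym : symmetric e.

Lemma compOf_components x : x \notin S -> compOf e S x \in components e S.
Proof. by move=> xS; apply: imset_f; rewrite inE. Qed.

Lemma notin_components C y : C \in components e S -> y \in C -> y \notin S.
Proof.
case/imsetP=> x; rewrite inE => xS -> {C}; rewrite inE => /connectP [p].
case/lastP: p => [_ -> //|p z]; rewrite rcons_path last_rcons => /andP [_].
by case/and3P=> _ _ zS ->.
Qed.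

Lemma path_sub_compOf a t :
  path e a t -> all (fun y => y \notin S) (a :: t) -> {subset a :: t <= compOf e S a}.
Proof.
move=> eat notS y yat; rewrite inE; apply: path_connect yat.
apply: (sub_in_path (P := fun y => y \notin S)) notS eat => x z xS zS exz.
by rewrite /outrel exz /=; apply/andP.
Qed.

Lemma compOf_eq x y : y \in compOf e S x -> compOf e S y = compOf e S x.
Proof.
have out_sym : symmetric (outrel e S).
  by move=> a b; rewrite /outrel e_sym; case: (a \in S); case: (b \in S); rewrite ?andbF.
rewrite inE => cxy; apply/setP => z; rewrite !inE.
by rewrite (same_connect (sym_connect_sym out_sym) cxy).
Qed.

Lemma components_compOf C y b :
  C \in components e S -> y \in C -> y \in compOf e S b -> C = compOf e S b.
Proof. by case/imsetP=> x _ -> yx yb; rewrite -(compOf_eq yx) (compOf_eq yb). Qed.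

End Components.

Section Routes.
Variables (T : finType) (e : rel T).
Hypothesis e_sym : symmetric e.

Definition route (C : {set T}) (u v : T) (w : seq T) : bool :=
  [&& path e u (rcons w v), uniq w, all (fun y => y \in C) w & w != [::]].

Lemma route_cons C u v a t :
  route C u v (a :: t) = [&& e u a, cpath e C a (last a t) (a :: t) & e (last a t) v].
Proof.
by rewrite /route /cpath /= rcons_path !eqxx /= andbT -!andbA; do !bool_congr.
Qed.

Lemma tpath_len_ge C a b t : cpath e C a b (a :: t) -> size t <= tpath_len e C a b.
Proof.
move=> abt; have /and4P [_ _ _ /andP [uat _]] := abt.
have lt_tT : size t < #|T| by have := max_card (mem (a :: t)); rewrite (card_uniqP uat).
apply: leq_trans (leq_bigmax (Ordinal lt_tT)) => /=.
by case: existsP => // -[]; exists (in_tuple (a :: t)).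
Qed.

Lemma inrel_path (C : {set T}) x p :
  path (inrel e C) x p -> path e x p /\ all (fun y => y \in C) p.
Proof.
elim: p x => //= y p IHp x /andP [/and3P [exy _ yC] /IHp [-> ->]].
by rewrite exy yC.
Qed.

Lemma tpath_len_path (C : {set T}) (a b : T) : a \in C -> connect (inrel e C) a b ->
  exists2 t, cpath e C a b (a :: t) & tpath_len e C a b <= size t.
Proof.
move=> aC /connectP [p ap ->]; case: (shortenP ap) => p' ap' uap' _.
have [eap' Cp'] := inrel_path ap'.
have T0 : 0 < #|{: 'I_#|T|}| by rewrite card_ord; apply/card_gt0P; exists a.
rewrite /tpath_len; have [n ->] := eq_bigmax (fun n : 'I_#|T| =>
  if [exists p : n.+1.-tuple T, cpath e C a (last a p') p] then val n else 0) T0.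
case: existsP => [[[[|x t] //= sz_t] cp]|_].
  have /and3P [/eqP xa _ _] := cp; rewrite /= in xa; subst x.
  by exists t => //; move/eqP: (sz_t) => -[->].
exists p' => //.
by rewrite /cpath uap' eap' /= aC Cp' !eqxx.
Qed.

Lemma clique_path (C : {set T}) x s : is_clique e C ->
  all (fun y => y \in C) (x :: s) -> uniq (x :: s) -> path e x s.
Proof.
move=> /forall_inP clC; elim: s x => //= y s IHs x /and3P [xC yC Cs].
rewrite in_cons negb_or => /andP [/andP [xy _] /andP [ys us]].
rewrite IHs ?yC ?ys //= andbT.
by have /forall_inP/(_ y yC)/implyP := clC x xC; apply.
Qed.

Lemma clique_route (C : {set T}) u v a b : is_clique e C ->
  a \in C -> b \in C -> a != b -> e u a -> e b v ->
  exists2 w, route C u v w & size w = #|C|.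
Proof.
move=> clC aC bC ab eua ebv; set s := enum (C :\ a :\ b).
have Cw : all (fun y => y \in C) (a :: rcons s b).
  by rewrite /= all_rcons aC bC; apply/allP => y; rewrite mem_enum !inE => /and3P [].
have uw : uniq (a :: rcons s b).
  rewrite /= mem_rcons rcons_uniq !inE negb_or ab enum_uniq mem_enum !inE eqxx /=.
  by rewrite mem_enum !inE eqxx andbF.
exists (a :: rcons s b).
  by rewrite /route uw Cw /= eua rcons_path (clique_path clC Cw uw) last_rcons ebv.
rewrite /= size_rcons /s -cardE.
by rewrite (cardsD1 a C) aC (cardsD1 b (C :\ a)) !inE eq_sym ab bC.
Qed.

Lemma q_route_ge (C : {set T}) u v w :
  route C u v w -> exists2 n, q e C u v = Some n & size w < n.
Proof.
case: w => [|a t]; first by rewrite /route andbF.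
rewrite route_cons => /and3P [eua cp elv].
have /and4P [_ _ _ /and3P [uat Cat _]] := cp.
have aN : a \in NC e C u by rewrite inE eua andbT; apply: (allP Cat); rewrite mem_head.
have lN : last a t \in NC e C v.
  by rewrite inE e_sym elv andbT; apply: (allP Cat); rewrite mem_last.
rewrite /q; have -> : (NC e C u == set0) = false by apply/negbTE/set0Pn; exists a.
have -> : (NC e C v == set0) = false by apply/negbTE/set0Pn; exists (last a t).
case: ifP => [_|_]; first case: ifP => [/andP [/eqP NCuv /cards1P [x NCx]]|_].
- exists 2 => //; move: aN lN uat; rewrite -NCuv NCx !inE => /eqP -> /eqP.
  by case: t {cp Cat elv} => //= y t lx /andP [+ _]; rewrite -{1}lx mem_last.
- exists #|C|.+1 => //; rewrite ltnS -(card_uniqP uat).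
  by apply: subset_leq_card; apply/subsetP => y /(allP Cat).
- exists (2 + \max_(a0 in NC e C u) \max_(b in NC e C v) tpath_len e C a0 b) => //.
  rewrite add2n /= !ltnS; apply: (bigmax_sup a) => //.
  exact: (bigmax_sup (last a t)) (tpath_len_ge cp).
Qed.

Lemma q_route (C : {set T}) u v n : is_clique e C \/ is_tree e C ->
  q e C u v = Some n -> exists2 w, route C u v w & n <= (size w).+1.
Proof.
move=> shape; rewrite /q; case: ifP => // /norP [NCu NCv].
case: ifP => [clC|nclC].
  case: ifP => [/andP [/eqP NCuv /cards1P [x NCx]] [<-]|not1 [<-]].
    have := set11 x; rewrite -{1}NCx => /setIdP [xC eux].
    have := set11 x; rewrite -NCx NCuv => /setIdP [_ evx].
    by exists [:: x]; rewrite // /route /= eux e_sym evx xC.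
  have [a [b [aN bN ab]]] := exists_distinct_mem2 NCu NCv (negbT not1).
  move: aN bN; rewrite !inE => /andP [aC eua] /andP [bC evb].
  have [w rw szw] := clique_route clC aC bC ab eua (etrans (e_sym b v) evb).
  by exists w; rewrite ?szw.
have [clC|[_ connC _]] := shape; first by rewrite clC in nclC.
move=> [<-].
have [a aN ->] := eq_bigmax_cond (fun a => \max_(b in NC e C v) tpath_len e C a b)
  (etrans (card_gt0 _) NCu).
have [b bN ->] := eq_bigmax_cond (tpath_len e C a) (etrans (card_gt0 _) NCv).
move: aN bN; rewrite !inE => /andP [aC eua] /andP [bC evb].
have [t cp len] := tpath_len_path aC (connC a b aC bC).
have /and3P [_ /eqP /= lb _] := cp.
exists (a :: t); first by rewrite route_cons eua lb cp e_sym evb.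
by rewrite add2n /= !ltnS.
Qed.

End Routes.

Section Fragments.
Variable A : eqType.

(* a cycle cut at some of its vertices: [(v_i, w_i)] is the cut vertex [v_i]
   followed by the internal vertices [w_i] of the fragment leaving it *)
Definition frag_seq (fr : seq (A * seq A)) : seq A := flatten [seq x.1 :: x.2 | x <- fr].

Definition frag_spans (fr : seq (A * seq A)) : seq ((A * A) * seq A) :=
  zip (zip (map fst fr) (rot 1 (map fst fr))) (map snd fr).

Lemma frag_seq_cons u w fr : frag_seq ((u, w) :: fr) = u :: w ++ frag_seq fr.
Proof. by []. Qed.

Lemma head_frag_seq d fr : head d (frag_seq fr) = head d (map fst fr).
Proof. by case: fr => [|[]]. Qed.

Lemma frag_seq_rot n fr :
  frag_seq (rot n fr) = rot (size (frag_seq (take n fr))) (frag_seq fr).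
Proof. by rewrite /frag_seq map_rot flatten_rot map_take. Qed.

Lemma frag_spans_rot n fr : frag_spans (rot n fr) = rot n (frag_spans fr).
Proof.
rewrite /frag_spans !map_rot rot_rot zip_rot ?size_rot // zip_rot //.
by rewrite size_zip !size_rot !size_map minnn.
Qed.

Lemma frag_spans_cons u w fr : frag_spans ((u, w) :: fr) =
  ((u, head u (map fst fr)), w) ::
    zip (zip (map fst fr) (behead (rcons (map fst fr) u))) (map snd fr).
Proof. by rewrite /frag_spans /= rot1_cons; case: fr => [|[]]. Qed.

Lemma subseq_frag_seq fr : subseq (map fst fr) (frag_seq fr).
Proof.
elim: fr => //= x fr IHfr; rewrite eqxx.
exact: subseq_trans IHfr (suffix_subseq _ _).
Qed.

Lemma mem_frag_seq y fr : y \in frag_seq fr ->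
  y \in map fst fr \/ exists2 x, x \in fr & y \in x.2.
Proof.
elim: fr => //= -[v w] fr IHfr; rewrite frag_seq_cons inE mem_cat /=.
case/or3P=> [yv | yw | /IHfr [yfr | [x xfr yx]]].
- by left; rewrite inE yv.
- by right; exists (v, w); rewrite ?inE ?eqxx.
- by left; rewrite inE yfr orbT.
- by right; exists x; rewrite ?inE ?xfr ?orbT.
Qed.

Lemma sorted_frag_seq (e : rel A) fr x :
  sorted e (frag_seq fr) -> x \in fr -> path e x.1 x.2.
Proof.
elim: fr => // -[v w] fr IHfr; rewrite frag_seq_cons /= cat_path.
case/andP=> vw /path_sorted wfr; rewrite inE => /predU1P [-> // | xfr].
exact: IHfr wfr xfr.
Qed.

Lemma cycle_cons_cat (e : rel A) x p s : cycle e (x :: p ++ s) =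
  path e x (rcons p (head x s)) && path e (head x s) (behead (rcons s x)).
Proof. by case: s => [|y s]; rewrite /= rcons_cat cat_path !rcons_path /= ?andbT ?andbA. Qed.

Fixpoint split_frags (a : pred A) (s : seq A) : seq A * seq (A * seq A) :=
  if s is x :: t then
    let: (p, fr) := split_frags a t in
    if a x then ([::], (x, p) :: fr) else (x :: p, fr)
  else ([::], [::]).

Lemma split_fragsP (a : pred A) s :
  [/\ (split_frags a s).1 ++ frag_seq (split_frags a s).2 = s,
      map fst (split_frags a s).2 = filter a s,
      all (predC a) (split_frags a s).1 &
      all (fun x => all (predC a) x.2) (split_frags a s).2].
Proof.
elim: s => //= x t; case: (split_frags a t) => p fr /= [<- <- pa fra].
by case: ifP => ax /=; rewrite ?ax ?pa ?fra.
Qed.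

End Fragments.

Section Labelling.
Variables (T : finType) (e : rel T) (S : {set T}) (k : nat).
Variable lab : T -> T -> {set {set T}}.
Hypotheses (e_sym : symmetric e) (card_S : #|S| = k).
Hypothesis comp_shape : forall C, C \in components e S -> is_clique e C \/ is_tree e C.
Hypothesis lab_valid : valid_labeling e S k lab.

Lemma lab_components u v C :
  u \in S -> v \in S -> C \in lab u v -> C \in components e S.
Proof.
move=> uS vS Clab; have [/subsetP/(_ C Clab)] := lab_valid uS vS.
by rewrite inE => /andP [].
Qed.

Lemma exists_unused_label u v C0 (cs : seq {set T}) :
  u \in S -> v \in S -> C0 \in components e S -> qpos (q e C0 u v) ->
  C0 \notin lab u v -> size cs < k ->
  exists2 C, C \in lab u v & C \notin cs /\ qle (q e C0 u v) (q e C u v).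
Proof.
move=> uS vS C0comp C0pos C0lab szcs; have [lab_cand card_lab lab_max] := lab_valid uS vS.
have C0cand : C0 \in [set C in components e S | qpos (q e C u v)] by rewrite inE C0comp.
(* [C0] is a candidate left out of [lab u v], so the labelling took [k] components *)
have card_lab_k : #|lab u v| = k.
  have : #|lab u v| < #|[set C in components e S | qpos (q e C u v)]|.
    by apply: proper_card; apply/properP; split => //; exists C0.
  by move: card_lab; rewrite /minn; case: ifP => // _ ->; rewrite ltnn.
have /subsetPn [C Clab Ccs] : ~~ (lab u v \subset cs).
  apply/negP => /subset_leq_card; rewrite card_lab_k => /leq_trans/(_ (card_size cs)).
  by rewrite leqNgt szcs.
by exists C => //; split => //; apply: lab_max.
Qed.

Lemma exists_labelled_route u v C0 w (cs : seq {set T}) :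
  u \in S -> v \in S -> C0 \in components e S -> route e C0 u v w ->
  C0 \notin lab u v -> size cs < k ->
  exists C w', [/\ C \in lab u v, C \notin cs, route e C u v w' & size w <= size w'].
Proof.
move=> uS vS C0comp rw C0lab szcs; have [n0 qC0 lt_w_n0] := q_route_ge e_sym rw.
have C0pos : qpos (q e C0 u v) by rewrite qC0 /= (leq_ltn_trans (leq0n _) lt_w_n0).
have [C Clab [Ccs]] := exists_unused_label uS vS C0comp C0pos C0lab szcs.
have Ccomp := lab_components uS vS Clab.
rewrite qC0; case qC: (q e C u v) => [n|] //= le_n0n.
have [w' rw' le_nw'] := q_route e_sym (comp_shape Ccomp) qC.
exists C, w'; split => //.
by rewrite -ltnS (leq_trans lt_w_n0 (leq_trans le_n0n le_nw')).
Qed.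

Definition frag_cycle (fr : seq (T * seq T)) : bool :=
  [&& all (fun x => x.1 \in S) fr, all (fun x => all (fun y => y \notin S) x.2) fr,
      uniq (frag_seq fr) & cycle e (frag_seq fr)].

Definition labelled_span (sp : (T * T) * seq T) : bool :=
  (sp.2 == [::]) || [exists C in lab sp.1.1 sp.1.2, all (fun y => y \in C) sp.2].

Lemma frag_cycle_of_cycle x s : x \in S -> uniq (x :: s) -> cycle e (x :: s) ->
  exists2 fr, frag_cycle fr &
    frag_seq fr = x :: s /\ map fst fr = [seq y <- x :: s | y \in S].
Proof.
move=> xS uniq_xs cycle_xs.
have [split_xs ends _ inner] := split_fragsP (fun y => y \in S) (x :: s).
have seq_xs : frag_seq (split_frags (fun y => y \in S) (x :: s)).2 = x :: s.
  by move: split_xs => /=; case: (split_frags _ s) => p fr /=; rewrite xS.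
exists (split_frags (fun y => y \in S) (x :: s)).2 => //.
move: ends; rewrite /frag_cycle seq_xs uniq_xs cycle_xs inner -all_map => ->.
by rewrite filter_all.
Qed.

Lemma frag_cycle_rot n fr : frag_cycle (rot n fr) = frag_cycle fr.
Proof.
by rewrite /frag_cycle frag_seq_rot rot_uniq rot_cycle !(perm_all _ (permEl (perm_rot n fr))).
Qed.

Lemma frag_cycle_size fr : frag_cycle fr -> size fr <= k.
Proof.
case/and4P=> endsS _ ufr _; rewrite -card_S cardE -(size_map fst).
apply: uniq_leq_size; first exact: subseq_uniq (subseq_frag_seq fr) ufr.
by move=> y /mapP [x xfr ->]; rewrite mem_enum; apply: (allP endsS).
Qed.

Lemma frag_cycle_path fr x : frag_cycle fr -> x \in fr -> path e x.1 x.2.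
Proof.
case/and4P=> _ _ _; case: (frag_seq fr) (@sorted_frag_seq _ e fr x) => // y s sfr.
by rewrite /= rcons_path => /andP [/sfr].
Qed.

Lemma components_disjoint_frag_seq d fr C :
  {in fr, forall x, path e x.1 x.2} -> all (fun x => x.1 \in S) fr ->
  all (fun x => all (fun y => y \notin S) x.2) fr ->
  C \in components e S -> C \notin [seq compOf e S (head d x.2) | x <- fr] ->
  {in C, forall y, y \notin frag_seq fr}.
Proof.
move=> pfr endsS innerS Ccomp Cfr y yC; have yS := notin_components Ccomp yC.
apply/negP => /mem_frag_seq [/mapP [x xfr yx] | [x xfr yx]].
  by move: yS; rewrite yx (allP endsS x xfr).
move: (pfr x xfr) (allP innerS x xfr) yx; case Ex: x.2 => // [b s] /andP [_ pbs] bsS ybs.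
have Cb := components_compOf e_sym Ccomp yC (path_sub_compOf pbs bsS ybs).
by move: Cfr; rewrite Cb; case/mapP; exists x; rewrite ?Ex.
Qed.

Lemma frag_cycle_cons u w rest : frag_cycle ((u, w) :: rest) =
  [&& u \in S, all (fun x => x.1 \in S) rest, all (fun y => y \notin S) w,
      all (fun x => all (fun y => y \notin S) x.2) rest,
      uniq (u :: w ++ frag_seq rest) & cycle e (u :: w ++ frag_seq rest)].
Proof. by rewrite /frag_cycle frag_seq_cons /= -!andbA. Qed.

Lemma frag_cycle_head_route u a t rest :
  frag_cycle ((u, a :: t) :: rest) ->
  route e (compOf e S a) u (head u (map fst rest)) (a :: t).
Proof.
rewrite frag_cycle_cons cons_uniq cat_uniq cycle_cons_cat head_frag_seq.
case/and5P=> _ _ atS _ /andP [/andP [_ /andP [uniq_at _]] /andP [puav _]].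
move: (puav); rewrite rcons_cons /= rcons_path => /andP [_ /andP [pat _]].
by rewrite /route puav uniq_at (introT allP (path_sub_compOf pat atS)).
Qed.

Lemma frag_cycle_set_head u w w' rest C :
  frag_cycle ((u, w) :: rest) -> C \in components e S ->
  C \notin [seq compOf e S (head u x.2) | x <- rest] ->
  route e C u (head u (map fst rest)) w' -> frag_cycle ((u, w') :: rest).
Proof.
move=> frc Ccomp Ccs; have prest : {in rest, forall x, path e x.1 x.2}.
  by move=> x xr; apply: frag_cycle_path frc _; rewrite inE xr orbT.
move: frc; rewrite !frag_cycle_cons !cons_uniq !mem_cat !negb_or !cat_uniq.
rewrite !cycle_cons_cat head_frag_seq.
case/and5P=> uS endsS _ innerS /andP [/andP [/andP [_ urest] /and3P [_ _ uniq_rest]]].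
case/andP=> _ pback /and4P [pw' uniq_w' w'C _].
have w'S : all (fun y => y \notin S) w'.
  by apply/allP => y /(allP w'C); apply: notin_components Ccomp.
rewrite uS endsS w'S innerS urest uniq_w' uniq_rest pw' pback !andbT /=.
apply/andP; split; first by apply: contraL uS => /(allP w'S).
apply/hasPn => y yR; apply: contraL yR => /(allP w'C).
exact: components_disjoint_frag_seq prest endsS innerS Ccomp Ccs y.
Qed.

Lemma relabel_head u w rest (v := head u (map fst rest)) :
  frag_cycle ((u, w) :: rest) -> ~~ labelled_span ((u, v), w) ->
  exists2 w', frag_cycle ((u, w') :: rest) &
              labelled_span ((u, v), w') && (size w <= size w').
Proof.
rewrite /labelled_span /= negb_or; case: w => // a t frc /exists_inPn wlab.
have := frc; rewrite frag_cycle_cons => /and3P [uS endsS /andP [/andP [aS _] _]].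
have vS : v \in S by move: endsS; rewrite /v; case: (rest) => //= x r /andP [].
have rC0 := frag_cycle_head_route frc.
have C0lab : compOf e S a \notin lab u v.
  by apply/negP => /wlab; have /and3P [_ _ /andP [->]] := rC0.
(* covers the components met by the other fragments; an empty one adds a junk set *)
have szcs : size [seq compOf e S (head u x.2) | x <- rest] < k.
  by rewrite size_map; apply: frag_cycle_size frc.
have [C [w' [Clab Ccs rw' le_ww']]] :=
  exists_labelled_route uS vS (compOf_components _ aS) rC0 C0lab szcs.
have Ccomp := lab_components uS vS Clab.
exists w'; first exact: frag_cycle_set_head frc Ccomp Ccs rw'.
rewrite le_ww' andbT /= orbC; apply/orP; left; apply/exists_inP; exists C => //.
by case/and3P: rw' => _ _ /andP [].
Qed.

Lemma relabel_frags fr : frag_cycle fr ->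
  exists fr', [/\ frag_cycle fr', exists i, map fst fr' = rot i (map fst fr),
                 size (frag_seq fr) <= size (frag_seq fr') &
                 all labelled_span (frag_spans fr')].
Proof.
elim: {fr}_.+1 {-2}fr (ltnSn (count (predC labelled_span) (frag_spans fr))) => // n IHn.
move=> fr lt_n frc; case: (boolP (all labelled_span (frag_spans fr))) => [lab_fr|].
  by exists fr; split => //; exists 0; rewrite rot0.
case/allPn=> sp sp_fr sp_bad; have [i s' spans_i] := rot_to sp_fr.
have frc_i : frag_cycle (rot i fr) by rewrite frag_cycle_rot.
have count_i : count (predC labelled_span) (frag_spans (rot i fr)) =
               count (predC labelled_span) (frag_spans fr).
  by rewrite frag_spans_rot; apply/permP/permEl/perm_rot.
have size_i : size (frag_seq (rot i fr)) = size (frag_seq fr).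
  by rewrite frag_seq_rot size_rot.
have ends_i : map fst (rot i fr) = rot i (map fst fr) by rewrite map_rot.
move: spans_i frc_i count_i size_i ends_i; rewrite -frag_spans_rot.
case: (rot i fr) => [|[u w] rest] //; rewrite frag_spans_cons => -[sp_eq _].
subst sp => frc_i count_i size_i ends_i.
have [w' frc' /andP [lab_w' le_ww']] := relabel_head frc_i sp_bad.
have [|fr' [frc'' [j ends_j] le_fr' lab_fr']] := IHn ((u, w') :: rest) _ frc'.
  move: lt_n; rewrite -count_i !frag_spans_cons /= lab_w' (negbTE sp_bad) /=.
  by rewrite add1n ltnS.
exists fr'; split => //.
  by exists (rot_add (map fst fr) i j); rewrite -rot_rot_add -ends_i ends_j.
rewrite -size_i; apply: leq_trans le_fr'.
by rewrite !frag_seq_cons /= !size_cat ltnS leq_add2r.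
Qed.

Lemma fragments_ok_spans fr :
  all (fun x => all (fun y => y \notin S) x.2) fr -> all labelled_span (frag_spans fr) ->
  fragments_ok S lab (map fst fr) (map snd fr).
Proof.
move=> innerS lab_fr u v w sp_fr; split.
  by case/mapP: (mem_zipr sp_fr) => x xfr ->; apply: (allP innerS).
case/orP: (allP lab_fr _ sp_fr) => /= [/eqP -> // | /exists_inP [C Clab wC]] _.
by exists C => // y; apply: (allP wC).
Qed.

End Labelling.

Theorem mainTheorem18 (T : finType) (e : rel T) (S : {set T}) (k : nat)
  (lab : T -> T -> {set {set T}}) (P : seq T) :
  symmetric e -> irreflexive e -> #|S| = k ->
  (forall C, C \in components e S -> is_clique e C \/ is_tree e C) ->
  valid_labeling e S k lab ->
  is_cycle e P -> has (fun x => x \in S) P ->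
  exists (P' : seq T) (vs : seq T) (ws : seq (seq T)) (j : nat),
    [/\ is_cycle e P',
        P' = flatten [seq x.1 :: x.2 | x <- zip vs ws],
        size ws = size vs,
        vs = rot j [seq x <- P | x \in S] &
        fragments_ok S lab vs ws /\ size P <= size P'].
Proof.
move=> e_sym _ card_S comp_shape lab_valid /and3P [size_P uniq_P cycle_P] /hasP [x xP xS].
have [i s rot_P] := rot_to xP.
have [fr0 frc0 [seq0 ends0]] : exists2 fr0, frag_cycle e S fr0 &
    frag_seq fr0 = rot i P /\ map fst fr0 = [seq y <- rot i P | y \in S].
  by rewrite rot_P; apply: frag_cycle_of_cycle; rewrite -?rot_P ?rot_uniq ?rot_cycle.
have [fr [frc [j ends_j] le_size lab_fr]] :=
  relabel_frags e_sym card_S comp_shape lab_valid frc0.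
have size0 : size (frag_seq fr0) = size P by rewrite seq0 size_rot.
have /and4P [_ inner uniq_fr cycle_fr] := frc.
exists (frag_seq fr), (map fst fr), (map snd fr),
  (rot_add [seq y <- P | y \in S] (count (fun y => y \in S) (take i P)) j).
have le_P : size P <= size (frag_seq fr) by rewrite -size0.
split; rewrite ?zip_unzip ?size_map //; last by split; [apply: fragments_ok_spans|].
  by rewrite /is_cycle uniq_fr cycle_fr (leq_trans size_P).
by rewrite ends_j ends0 filter_rot rot_rot_add.
Qed.
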